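(* Let $(A,\mathfrak m)$ be a local Prüfer ring, $B$ a ring, $f : A \to B$ a ring homomorphism and $J$ a proper ideal of $B$ with $J \subseteq \mathrm{Rad}(B)$. Assume that $J \subseteq f(A)$, $f^{-1}(J) \subseteq Z(A)$ and $f(\mathrm{Reg}(A)) \subseteq \mathrm{Reg}(B)$. Then $Z(A \bowtie^f J) = Z(A) \bowtie^f J$.
   Context: All rings are commutative with identity. For a ring homomorphism $f:A\to B$ and an ideal $J$ of $B$, $A \bowtie^f J := \{(a, f(a)+j) : a \in A, j \in J\}$, a subring of $A\times B$, and for $S\subseteq A$, $S\bowtie^f J := \{(a,f(a)+j): a\in S, j\in J\}$. $Z(R)$ is the set of zero-divisors of $R$, $\mathrm{Reg}(R)=R\setminus Z(R)$, $\mathrm{Rad}(B)$ is the Jacobson radical of $B$. An ideal is regular if it contains a regular element. A ring $R$ is a Prüfer ring if every finitely generated regular ideal of $R$ is invertible. *)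

From HB Require Import structures.
From mathcomp Require Import all_boot all_order all_algebra.
Set Implicit Arguments. Unset Strict Implicit. Unset Printing Implicit Defensive.
Import GRing.Theory.
Local Open Scope ring_scope.

Section Defs.
Variable R : comNzRingType.

Definition is_ideal (I : R -> Prop) : Prop :=
  [/\ I 0, (forall x y, I x -> I y -> I (x + y)) & (forall r x, I x -> I (r * x))].

Definition is_maximal_ideal (M : R -> Prop) : Prop :=
  [/\ is_ideal M, ~ M 1 &
      forall I : R -> Prop, is_ideal I -> (forall x, M x -> I x) ->
        (forall x, I x <-> M x) \/ I 1].

Definition is_local (Mx : R -> Prop) : Prop :=
  is_maximal_ideal Mx /\
  forall M : R -> Prop, is_maximal_ideal M -> forall x, M x <-> Mx x.

Definition jacobson_rad (x : R) : Prop :=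
  forall M : R -> Prop, is_maximal_ideal M -> M x.

Definition zero_div (x : R) : Prop := exists2 y : R, y != 0 & x * y = 0.
Definition regular (x : R) : Prop := ~ zero_div x.

Definition regular_ideal (I : R -> Prop) : Prop := exists2 x, I x & regular x.

Definition generated_by (s : seq R) (x : R) : Prop :=
  exists c : 'I_(size s) -> R, x = \sum_(i < size s) c i * s`_i.

Definition fin_gen_ideal (I : R -> Prop) : Prop :=
  exists s : seq R, forall x, I x <-> generated_by s x.

Definition ideal_mul (I I' : R -> Prop) (x : R) : Prop :=
  exists n (a b : 'I_n -> R), (forall i, I (a i)) /\ (forall i, I' (b i)) /\
     x = \sum_(i < n) a i * b i.

(* I is invertible (in the total ring of quotients): there is a fractional
   ideal F = d^-1 I' (d regular, I' an ideal of R) with I F = R, i.e. I I' = dR. *)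
Definition invertible_ideal (I : R -> Prop) : Prop :=
  exists (I' : R -> Prop) (d : R), is_ideal I' /\ regular d /\
    forall x, ideal_mul I I' x <-> exists r, x = d * r.

Definition prufer_ring : Prop :=
  forall I : R -> Prop, is_ideal I -> fin_gen_ideal I -> regular_ideal I ->
    invertible_ideal I.

Definition zero_div_in (S : R -> Prop) (x : R) : Prop :=
  S x /\ exists y, [/\ S y, y != 0 & x * y = 0].
End Defs.

Definition amalg (A B : comNzRingType) (f : {rmorphism A -> B})
  (S : A -> Prop) (J : B -> Prop) (p : A * B) : Prop :=
  exists a j, [/\ S a, J j & p = (a, f a + j)].

From HB Require Import structures.
From mathcomp Require Import all_boot all_order all_algebra.
From mathcomp Require Import ring boolp classical_sets.
Set Implicit Arguments. Unset Strict Implicit. Unset Printing Implicit Defensive.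
Import GRing.Theory.
Local Open Scope ring_scope.

(* In a local Prüfer ring, a regular element plus a zero-divisor is regular:
   the ideal (a, c) is finitely generated and regular, hence invertible, and an
   invertible ideal of a local ring is principal, generated by a regular g.
   Writing a = g a', c = g c', the cofactor c' is a zero-divisor, hence lies in
   the maximal ideal, so a' is a unit and a + c = a (1 + a'^-1 c') is regular.
   In the amalgamation, if (a, f a + j) is a zero-divisor with a regular, write
   j = f c: then c is a zero-divisor, so f a + j = f (a + c) is regular, which
   forces every annihilator (b, f b + k) to vanish. Conversely, if a b = 0 with
   b != 0, then (c b, 0) or, when c b = 0, (b, f b) annihilates (a, f a + j). *)

Section Krull.
Local Open Scope classical_set_scope.
Variable R : comNzRingType.

Lemma exists_maximal_ideal_sup (I : R -> Prop) :
  is_ideal I -> ~ I 1 -> exists2 M, is_maximal_ideal M & forall x, I x -> M x.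
Proof.
move=> HI HI1.
pose proper_sup X := is_ideal X /\ (forall x, I x -> X x) /\ ~ X 1.
(* The empty predicate is admitted so that the empty chain has an upper bound. *)
pose P := fun X : R -> Prop => X = (fun _ => False) \/ proper_sup X.
have PX X z : P X -> X z -> proper_sup X by case=> [->|].
have chainP : forall F : set (set R), F `<=` P -> total_on F subset ->
    P (\bigcup_(X in F) X).
  move=> F FP Ftot.
  have [[X0 FX0 X00]|nE] := pselect (exists2 X, F X & X 0); last first.
    left; apply/funext => x; apply/propext; split=> // -[X FX Xx].
    by apply: nE; exists X => //; have [[]] := PX _ _ (FP _ FX) Xx.
  right; have [_ [IX0 _]] := PX _ _ (FP _ FX0) X00.
  split; last split; first split.
  - by exists X0.
  - move=> x y [X FX Xx] [Y FY Yy].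
    have [XY|YX] := Ftot _ _ FX FY.
    + have [[_ DY _] _] := PX _ _ (FP _ FY) Yy.
      by exists Y => //; apply: DY => //; apply: XY.
    + have [[_ DX _] _] := PX _ _ (FP _ FX) Xx.
      by exists X => //; apply: DX => //; apply: YX.
  - move=> r x [X FX Xx]; have [[_ _ MX] _] := PX _ _ (FP _ FX) Xx.
    by exists X => //; apply: MX.
  - by move=> x Ix; exists X0 => //; apply: IX0.
  - by move=> [X FX X1]; have [_ [_]] := PX _ _ (FP _ FX) X1; apply.
have [M [PM Mmax]] := Zorn_bigcup chainP.
case: PM => [M0|[HM [IM M1]]].
  exfalso; apply: (Mmax I); last by right.
  by rewrite M0; split=> // H; case: HI => I0 _ _; apply: (H 0).
exists M => //; split=> // I' HI' MI'.
have [I'1|nI'1] := pselect (I' 1); first by right.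
left; have [I'M|nI'M] := pselect (forall x, I' x -> M x).
  by move=> x; split; [apply: I'M | apply: MI'].
exfalso; apply: (Mmax I'); last by right; split=> //; split=> // x /IM /MI'.
by split=> // H; apply: nI'M => x; apply: H.
Qed.

End Krull.

Section Regular.
Variable R : comNzRingType.
Implicit Types x y : R.

Lemma regular_cancel x y : regular x -> x * y = 0 -> y = 0.
Proof. by move=> Hx xy0; apply/eqP; apply/negPn/negP => y0; apply: Hx; exists y. Qed.

Lemma regular_lreg x : regular x -> GRing.lreg x.
Proof.
move=> Hx y z xyz; apply/eqP; rewrite -subr_eq0; apply/eqP.
by apply: (regular_cancel Hx); rewrite mulrBr xyz subrr.
Qed.

Lemma regularM x y : regular x -> regular y -> regular (x * y).
Proof.
move=> Hx Hy [z z0 xyz0]; move/negP: z0; apply; apply/eqP.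
by apply: (regular_cancel Hy); apply: (regular_cancel Hx); rewrite mulrA.
Qed.

Lemma regular_mull x y : regular (x * y) -> regular x.
Proof.
move=> Hxy [z z0 xz0]; apply: Hxy; exists z => //.
by rewrite mulrAC xz0 mul0r.
Qed.

Lemma unit_regular x y : x * y = 1 -> regular x.
Proof.
move=> xy1 [z z0 xz0]; move/negP: z0; apply; apply/eqP.
by rewrite -[z]mul1r -xy1 mulrAC xz0 mul0r.
Qed.

Lemma zero_div_mulr x y : regular x -> zero_div (x * y) -> zero_div y.
Proof.
move=> Hx [z z0 xyz0]; exists z => //.
by apply: (regular_cancel Hx); rewrite mulrA.
Qed.

End Regular.

Section Local.
Variables (R : comNzRingType) (m : R -> Prop).
Hypothesis local_m : is_local m.

Lemma local_unit r : ~ m r -> exists s, r * s = 1.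
Proof.
move=> mr; have [//|nunit] := pselect (exists s, r * s = 1); exfalso.
pose rR x := exists s, x = r * s.
have rR_ideal : is_ideal rR.
  split; first by exists 0; rewrite mulr0.
  - by move=> x y [s1 ->] [s2 ->]; exists (s1 + s2); rewrite mulrDr.
  - by move=> t x [s ->]; exists (t * s); rewrite mulrCA.
have [M maxM rRM] := exists_maximal_ideal_sup rR_ideal (fun '(ex_intro s s1) =>
  nunit (ex_intro _ s (esym s1))).
by apply: mr; apply/(local_m.2 M maxM); apply: rRM; exists 1; rewrite mulr1.
Qed.

Lemma local_zero_div r : zero_div r -> m r.
Proof.
move=> zr; have [//|mr] := pselect (m r).
by have [s /unit_regular] := local_unit mr.
Qed.

Lemma local_unit1D w : m w -> exists s, (1 + w) * s = 1.
Proof.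
move=> mw; apply: local_unit => m1w; have [[[_ mD mM] m1 _] _] := local_m.
by apply: m1; rewrite -(addrK w 1) -mulN1r; apply: mD; [|apply: mM].
Qed.

(* From d = \sum_i u_i v_i with u_i v_i = d r_i and d regular, \sum_i r_i = 1,
   so some r_i is a unit; then u_i is regular and generates the ideal. *)
Lemma local_invertible_principal (I : R -> Prop) : invertible_ideal I ->
  exists g, [/\ I g, regular g & forall x, I x -> exists z, x = g * z].
Proof.
have [[[m0 mD _] m1 _] _] := local_m.
move=> [I' [d [_ [Hd Hmul]]]].
have prod_mul x y : I x -> I' y -> exists r, x * y = d * r.
  move=> Ix I'y; apply/(Hmul _).1; exists 1%N, (fun _ => x), (fun _ => y).
  by rewrite big_ord1.
have [n [u [v [Iu [I'v dE]]]]] := (Hmul d).2 (ex_intro _ 1 (esym (mulr1 d))).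
have [r Hr] := choice (fun i => prod_mul _ _ (Iu i) (I'v i)).
have sum_r : \sum_i r i = 1.
  apply: (regular_lreg Hd); rewrite mulr_sumr mulr1 [RHS]dE.
  by apply: eq_bigr => i _; rewrite Hr.
have [[i mri]|all_m] := pselect (exists i, ~ m (r i)); last first.
  exfalso; apply: m1; rewrite -sum_r; apply: (big_ind m) => // i _.
  by have [//|mri] := pselect (m (r i)); exfalso; apply: all_m; exists i.
have [s rs1] := local_unit mri.
have Hg : regular (u i).
  apply: (@regular_mull _ _ (v i)); rewrite Hr.
  exact: regularM Hd (unit_regular rs1).
exists (u i); split=> // x Ix.
have [w xw] := prod_mul _ _ Ix (I'v i).
have xr : x * r i = u i * w.
  apply: (regular_lreg Hd); by rewrite mulrCA -Hr mulrCA xw mulrCA.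
by exists (w * s); rewrite mulrA -xr -mulrA rs1 mulr1.
Qed.

End Local.

Section TwoGenerated.
Variable R : comNzRingType.

Definition ideal2 (a c x : R) : Prop := exists u v, x = u * a + v * c.

Lemma ideal2_ideal (a c : R) : is_ideal (ideal2 a c).
Proof.
split; first by exists 0, 0; rewrite !mul0r addr0.
- by move=> x y [u1 [v1 ->]] [u2 [v2 ->]]; exists (u1 + u2), (v1 + v2); ring.
- by move=> t x [u [v ->]]; exists (t * u), (t * v); ring.
Qed.

Lemma ideal2_fin_gen (a c : R) : fin_gen_ideal (ideal2 a c).
Proof.
exists [:: a; c] => x; split.
  move=> [u [v ->]]; exists (fun i : 'I_2 => if val i == 0%N then u else v).
  by rewrite !big_ord_recl big_ord0 /= addr0.
by move=> [w ->]; rewrite !big_ord_recl big_ord0 addr0; eexists; eexists.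
Qed.

End TwoGenerated.

Section LocalPrufer.
Variables (R : comNzRingType) (m : R -> Prop).
Hypotheses (local_m : is_local m) (prufer_R : prufer_ring R).

Lemma local_prufer_regularD (a c : R) : regular a -> zero_div c -> regular (a + c).
Proof.
move=> Ha Hc.
have [[[_ mD mM] m1 _] _] := local_m.
have Ia : ideal2 a c a by exists 1, 0; ring.
have Ic : ideal2 a c c by exists 0, 1; ring.
have [g [[u [v gE]] Hg gen]] := local_invertible_principal local_m
  (prufer_R (ideal2_ideal a c) (ideal2_fin_gen a c) (ex_intro2 _ _ a Ia Ha)).
have [a' aE] := gen _ Ia; have [c' cE] := gen _ Ic.
have uv1 : u * a' + v * c' = 1.
  by apply: (regular_lreg Hg); rewrite mulr1 [RHS]gE aE cE; ring.
have mc' : m c'.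
  by apply: (local_zero_div local_m); apply: zero_div_mulr Hg _; rewrite -cE.
have ma' : ~ m a' by move=> ma'; apply: m1; rewrite -uv1; apply: mD; apply: mM.
have [s a's1] := local_unit local_m ma'.
have [e Ee] := local_unit1D local_m (mM s _ mc').
have -> : a + c = a * (1 + s * c').
  by rewrite mulrDr mulr1 aE cE mulrA -(mulrA g a') a's1 mulr1.
exact: regularM Ha (unit_regular Ee).
Qed.

End LocalPrufer.

Section Amalgamation.
Variables (A B : comNzRingType) (f : {rmorphism A -> B}) (J : B -> Prop).
Hypothesis J_image : forall b, J b -> exists a, f a = b.

Lemma amalg_zero_div_in (p : A * B) : is_ideal J ->
  amalg f (@zero_div A) J p -> zero_div_in (amalg f (fun _ => True) J) p.
Proof.
move=> [J0 _ JM] [a [j [[b b0 ab0] Jj ->]]]; split; first by exists a, j.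
have [c fc] := J_image Jj.
have [cb0|cb0] := eqVneq (c * b) 0.
  exists (b, f b); split.
  - by exists b, 0; rewrite addr0.
  - by apply: contra_neq b0 => /(congr1 fst).
  - apply: injective_projections => //=.
    by rewrite -fc -rmorphD -rmorphM mulrDl ab0 cb0 add0r rmorph0.
exists (c * b, 0); split.
- exists (c * b), (- f (c * b)); split; rewrite ?addrN //.
  by rewrite rmorphM fc mulrC -mulNr; apply: JM.
- by apply: contra_neq cb0 => /(congr1 fst).
- by apply: injective_projections => /=; rewrite ?mulr0 // mulrCA ab0 mulr0.
Qed.

Hypotheses (J_preim_zero_div : forall a, J (f a) -> zero_div a)
  (f_regular : forall a, regular a -> regular (f a)).

Lemma zero_div_in_amalg (p : A * B) :
  (forall a c : A, regular a -> zero_div c -> regular (a + c)) ->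
  zero_div_in (amalg f (fun _ => True) J) p -> amalg f (@zero_div A) J p.
Proof.
move=> regularD [[a [j [_ Jj ->]]] [[b z] [[b' [k [_ _ [-> ->]]]] bk0 [ab0 fk0]]]].
have [za|ra] := pselect (zero_div a); first by exists a, j.
exfalso; have [c fc] := J_image Jj.
have b0 : b' = 0 := regular_cancel ra ab0.
have reg : regular (f a + j).
  by rewrite -fc -rmorphD; apply/f_regular/regularD/J_preim_zero_div; rewrite ?fc.
have k0 : k = 0 by apply: (regular_cancel reg); rewrite -fk0 b0 rmorph0 add0r.
by move/negP: bk0; apply; rewrite b0 k0 rmorph0 addr0.
Qed.

End Amalgamation.

Theorem lemma2p6 (A B : comNzRingType) (m : A -> Prop) (f : {rmorphism A -> B})
  (J : B -> Prop) :
  is_local m -> prufer_ring A ->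
  is_ideal J -> ~ J 1 -> (forall b, J b -> jacobson_rad b) ->
  (forall b, J b -> exists a, f a = b) ->
  (forall a, J (f a) -> zero_div a) ->
  (forall a, regular a -> regular (f a)) ->
  forall p : A * B,
    zero_div_in (amalg f (fun _ => True) J) p <-> amalg f (@zero_div A) J p.
Proof.
(* J need be neither proper nor contained in the Jacobson radical of B. *)
move=> local_m prufer_A J_ideal _ _ J_image J_preim f_regular p; split.
- apply: zero_div_in_amalg J_image J_preim f_regular p _.
  exact: local_prufer_regularD local_m prufer_A.
- exact: amalg_zero_div_in J_image p J_ideal.
Qed.
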